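(* Let $n>0$ and $k>1$. The minimal elements, among the subquasivarieties of $\mathcal{Q}(\mathbf{ŁV}_{nk+1})$ strictly containing $\mathcal{Q}(\mathbf{ŁV}_{n+1})$, are exactly the quasivarieties in $$\{\mathcal{Q}(\{\mathbf{ŁV}_{n+1},\mathbf{ŁV}_{q+1}\times\mathbf{ŁV}_2\}) : q\text{ prime},\ q\mid k,\ q\nmid n\}\ \cup\ \{\mathcal{Q}(\{\mathbf{ŁV}_{n+1},\mathbf{ŁV}_{q^{r+1}+1}\times\mathbf{ŁV}_2\}) : q\text{ prime},\ r\ge1,\ q\mid k,\ q^r\mid n,\ q^{r+1}\nmid n\}.$$
   Context: $\mathbf{ŁV}_{m+1}$ is the MV-algebra (Łukasiewicz chain) on $\{0,\frac1m,\dots,1\}$ with $\neg x=1-x$, $x\oplus y=\min\{1,x+y\}$; $\mathbf{ŁV}_2$ is the two-element Boolean algebra. $\mathcal{Q}(K)$ denotes the quasivariety generated by the class $K$. *)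

From Stdlib Require Import List.
From mathcomp Require Import all_boot.
Set Implicit Arguments. Unset Strict Implicit. Unset Printing Implicit Defensive.

Record MVsig := MkMVsig {
  carrier :> Type;
  mzero : carrier;
  mneg : carrier -> carrier;
  moplus : carrier -> carrier -> carrier
}.

Inductive term : Type :=
| tvar : nat -> term
| tzero : term
| tneg : term -> term
| toplus : term -> term -> term.

Fixpoint eval (A : MVsig) (v : nat -> A) (t : term) : A :=
  match t with
  | tvar i => v i
  | tzero => mzero A
  | tneg s => mneg (eval v s)
  | toplus s u => moplus (eval v s) (eval v u)
  end.

Record qeq := MkQeq { premises : list (term * term); concl : term * term }.

Definition sat (A : MVsig) (e : qeq) : Prop :=
  forall v : nat -> A,
    (forall p, List.In p (premises e) -> eval v p.1 = eval v p.2) ->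
    eval v (concl e).1 = eval v (concl e).2.

Definition MVclass := MVsig -> Prop.

Definition subclass (C D : MVclass) : Prop := forall A, C A -> D A.
Definition eqclass (C D : MVclass) : Prop := forall A, C A <-> D A.
Definition strict_subclass (C D : MVclass) : Prop :=
  subclass C D /\ ~ subclass D C.

Definition is_quasivariety (C : MVclass) : Prop :=
  exists Sigma : qeq -> Prop,
    forall A, C A <-> (forall e, Sigma e -> sat A e).

Definition Qgen (K : MVclass) : MVclass :=
  fun A => forall e, (forall B, K B -> sat B e) -> sat A e.

Definition single (A : MVsig) : MVclass := fun B => B = A.
Definition pair (A B : MVsig) : MVclass := fun X => X = A \/ X = B.

Definition prodMV (A B : MVsig) : MVsig :=
  @MkMVsig (A * B)%type (mzero A, mzero B)
    (fun x => (mneg x.1, mneg x.2))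
    (fun x y => (moplus x.1 y.1, moplus x.2 y.2)).

(* LV m is the chain LV_{m+1} = {0, 1/m, ..., 1}; element i/m is coded by
   i : 'I_m.+1. neg (i/m) = (m-i)/m, i/m (+) j/m = min(m, i+j)/m. *)
Lemma LV_neg_lt (m : nat) (x : 'I_m.+1) : m - x < m.+1.
Proof. by rewrite ltnS leq_subr. Qed.

Lemma LV_oplus_lt (m : nat) (x y : 'I_m.+1) : minn m (x + y) < m.+1.
Proof. by rewrite ltnS geq_minl. Qed.

Definition LV (m : nat) : MVsig :=
  @MkMVsig 'I_m.+1 ord0
    (fun x => Ordinal (LV_neg_lt x))
    (fun x y => Ordinal (LV_oplus_lt x y)).

Definition minimal_cover (bot top C : MVclass) : Prop :=
  [/\ is_quasivariety C, subclass C (Qgen top), strict_subclass (Qgen bot) C &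
      forall D, is_quasivariety D -> subclass D (Qgen top) ->
        strict_subclass (Qgen bot) D -> subclass D C -> subclass C D].

From mathcomp Require Import all_boot zify.
From Stdlib Require Import Classical.
From Stdlib Require List.
Set Implicit Arguments. Unset Strict Implicit. Unset Printing Implicit Defensive.

(* Write [LVB m] for [LV m x LV 1] and [m = q ^ (logn q n).+1] for a prime
   [q] dividing [k].  A quasivariety [D] strictly between [Q(LV n)] and
   [Q(LV (n * k))] contains some [B] refuting at [v] a quasi-equation [e] valid
   in [LV n].  A refutation of [e] in [LV (n * k)] must use a value [x] not
   divisible by [k]; the terms then reach every multiple of [gcd(x, n k)], and
   for a suitable [q] this includes [n k / m], which a term [t] can isolate so
   that [t] only takes the values [0] and [1/m].  One such term for each of the
   finitely many refutations gives a quasi-equation valid in [LV (n * k)],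
   hence in [B]; so one of the terms is nonzero at [v], and it induces
   embeddings showing [LVB m] in [Q(B, LV n)], which is contained in [D].
   Conversely, the quasi-equation [psi m] holds in [LV n] but fails in
   [LVB m], so [Q(LV n, LVB m)] lies strictly above [Q(LV n)], and it does not
   contain [LVB m'] for a different prime [q']. *)

Definition hom (A B : MVsig) (f : A -> B) : Prop :=
  [/\ f (mzero A) = mzero B, (forall x, f (mneg x) = mneg (f x)) &
      (forall x y, f (moplus x y) = moplus (f x) (f y))].

Lemma hom_eval (A B : MVsig) (f : A -> B) (v : nat -> A) (t : term) :
  hom f -> f (eval v t) = eval (fun i => f (v i)) t.
Proof.
by case=> f0 fN fD; elim: t => //= [s IH | s IHs u IHu]; rewrite ?fN ?fD ?IH ?IHs ?IHu.
Qed.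

Lemma hom_comp (A B C : MVsig) (f : A -> B) (g : B -> C) :
  hom f -> hom g -> hom (fun x => g (f x)).
Proof.
case=> f0 fN fD [g0 gN gD]; split=> [|x|x y]; by rewrite ?f0 ?fN ?fD ?g0 ?gN ?gD.
Qed.

Lemma hom_fst (A B : MVsig) : hom (fun x : prodMV A B => x.1).
Proof. by []. Qed.

Lemma hom_snd (A B : MVsig) : hom (fun x : prodMV A B => x.2).
Proof. by []. Qed.

Lemma eval_prodMV (A B : MVsig) (v : nat -> prodMV A B) (t : term) :
  eval v t = (eval (fun i => (v i).1) t, eval (fun i => (v i).2) t).
Proof. by elim: t => [i||s /= ->|s /= -> u ->] //=; case: (v i). Qed.

Lemma not_sat_witness (A : MVsig) (e : qeq) : ~ sat A e ->
  exists v : nat -> A,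
    (forall p, List.In p (premises e) -> eval v p.1 = eval v p.2) /\
    eval v (concl e).1 <> eval v (concl e).2.
Proof.
move=> nsat; apply: NNPP => nex; apply: nsat => v Hp.
by apply: NNPP => Hc; apply: nex; exists v.
Qed.

Lemma sub_Qgen (K : MVclass) : subclass K (Qgen K).
Proof. by move=> A KA e He; apply: He. Qed.

Lemma Qgen_quasivariety (K : MVclass) : is_quasivariety (Qgen K).
Proof. by exists (fun e => forall B, K B -> sat B e). Qed.

Lemma Qgen_min (K D : MVclass) :
  is_quasivariety D -> subclass K D -> subclass (Qgen K) D.
Proof.
case=> S HS KD A QA; apply/HS => e Se; apply: QA => B KB.
exact: (HS B).1 (KD B KB) e Se.
Qed.

Lemma Qgen_mono (K K' : MVclass) : subclass K (Qgen K') -> subclass (Qgen K) (Qgen K').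
Proof. exact: Qgen_min (Qgen_quasivariety K'). Qed.

Lemma Qgen_sat (K : MVclass) (A : MVsig) (e : qeq) :
  Qgen K A -> (forall B, K B -> sat B e) -> sat A e.
Proof. by move=> QA; apply: QA. Qed.

Lemma Qgen_eval_eq (K : MVclass) (A : MVsig) (t1 t2 : term) :
  Qgen K A -> (forall B, K B -> forall w : nat -> B, eval w t1 = eval w t2) ->
  forall v : nat -> A, eval v t1 = eval v t2.
Proof.
move=> QA H v; apply: (Qgen_sat (e := MkQeq nil (t1, t2)) QA) => // B KB w _.
exact: H.
Qed.

Lemma not_Qgen_witness (K : MVclass) (A : MVsig) : ~ Qgen K A ->
  exists e, (forall B, K B -> sat B e) /\ ~ sat A e.
Proof.
move=> nQ; apply: NNPP => nex; apply: nQ => e He.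
by apply: NNPP => ns; apply: nex; exists e.
Qed.

(* [A] embeds into a product of members of [K], and quasi-equations valid in
   [K] are preserved by products and subalgebras. *)
Lemma Qgen_separating (K : MVclass) (A : MVsig) :
  (forall a1 a2 : A, a1 <> a2 ->
     exists (B : MVsig) (f : A -> B), [/\ K B, hom f & f a1 <> f a2]) ->
  Qgen K A.
Proof.
move=> sep e He v Hp; apply: NNPP => /sep [B [f [KB hf]]]; apply.
rewrite !(hom_eval _ _ hf); apply: (He B KB) => p /Hp.
by rewrite -!(hom_eval _ _ hf) => ->.
Qed.

Definition vl (m : nat) (x : LV m) : nat := @nat_of_ord m.+1 x.

Lemma vl_inj (m : nat) : injective (@vl m).
Proof. exact: (@ord_inj m.+1). Qed.

Lemma vl_le (m : nat) (x : LV m) : vl x <= m.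
Proof. by rewrite -ltnS; exact: (@ltn_ord m.+1). Qed.

Lemma vl_mneg (m : nat) (x : LV m) : vl (mneg x) = m - vl x.
Proof. by []. Qed.

Lemma vl_moplus (m : nat) (x y : LV m) : vl (moplus x y) = minn m (vl x + vl y).
Proof. by []. Qed.

Fixpoint tmul (j : nat) (t : term) : term :=
  if j is j'.+1 then toplus (tmul j' t) t else tzero.
Definition todot (a b : term) : term := tneg (toplus (tneg a) (tneg b)).
Definition tsub (a b : term) : term := tneg (toplus (tneg a) b).

Section TermValues.
Variable N : nat.
Implicit Types w : nat -> LV N.

Lemma vl_tzero w : vl (eval w tzero) = 0. Proof. by []. Qed.
Lemma vl_tneg w s : vl (eval w (tneg s)) = N - vl (eval w s). Proof. by []. Qed.
Lemma vl_toplus w s u : vl (eval w (toplus s u)) = minn N (vl (eval w s) + vl (eval w u)).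
Proof. by []. Qed.

Lemma vl_tmul w j t : vl (eval w (tmul j t)) = minn N (j * vl (eval w t)).
Proof.
elim: j => [|j IH]; first by rewrite mul0n minn0.
by rewrite vl_toplus IH mulSn; have := vl_le (eval w t); lia.
Qed.

Lemma vl_todot w a b : vl (eval w (todot a b)) = vl (eval w a) + vl (eval w b) - N.
Proof.
rewrite vl_tneg vl_toplus !vl_tneg.
by have := vl_le (eval w a); have := vl_le (eval w b); lia.
Qed.

Lemma vl_tsub w a b : vl (eval w (tsub a b)) = vl (eval w a) - vl (eval w b).
Proof.
rewrite vl_tneg vl_toplus !vl_tneg.
by have := vl_le (eval w a); have := vl_le (eval w b); lia.
Qed.

End TermValues.

Fixpoint vars_lt (V : nat) (t : term) : bool :=
  match t with
  | tvar i => i < V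
  | tzero => true
  | tneg s => vars_lt V s
  | toplus s u => vars_lt V s && vars_lt V u
  end.

Lemma eq_eval (A : MVsig) (w1 w2 : nat -> A) (V : nat) (t : term) :
  vars_lt V t -> (forall i, i < V -> w1 i = w2 i) -> eval w1 t = eval w2 t.
Proof.
move=> tV eqw; elim: t tV => [i|//|s IH|s IHs u IHu] /=.
- exact: eqw.
- by move=> /IH ->.
- by move=> /andP[/IHs -> /IHu ->].
Qed.

Lemma vars_lt_mono (V V' : nat) (t : term) : V <= V' -> vars_lt V t -> vars_lt V' t.
Proof.
move=> VV'; elim: t => [i|//|//|s IHs u IHu] /=.
- by move=> iV; exact: leq_trans iV VV'.
- by move=> /andP[/IHs -> /IHu ->].
Qed.

Lemma vars_lt_tmul (V j : nat) (t : term) : vars_lt V t -> vars_lt V (tmul j t).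
Proof. by move=> tV; elim: j => //= j ->. Qed.

Lemma vars_lt_exists (ps : list (term * term)) :
  exists V, forall p, List.In p ps -> vars_lt V p.1 && vars_lt V p.2.
Proof.
have vars_lt_term t : exists V, vars_lt V t.
  elim: t => [i||s [V sV]|s [V1 sV1] u [V2 uV2]].
  - by exists i.+1 => /=.
  - by exists 0.
  - by exists V.
  exists (maxn V1 V2) => /=.
  by rewrite (vars_lt_mono _ sV1) ?(vars_lt_mono _ uV2) ?leq_maxl ?leq_maxr.
elim: ps => [|[a b] ps [V HV]]; first by exists 0.
have [[Va aV] [Vb bV]] := (vars_lt_term a, vars_lt_term b).
exists (maxn V (maxn Va Vb)) => p /= [<-|/HV /andP[p1 p2]] /=.
- by rewrite (vars_lt_mono _ aV) ?(vars_lt_mono _ bV) //; lia.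
- by rewrite (vars_lt_mono _ p1) ?(vars_lt_mono _ p2) //; lia.
Qed.

Definition LVB (m : nat) : MVsig := prodMV (LV m) (LV 1).

Definition psi (m : nat) : qeq :=
  MkQeq [:: (toplus (tmul m (tvar 0)) (tmul m (tvar 0)), tmul m (tvar 0));
            (todot (tvar 0) (tmul m.-1 (tvar 0)), tzero)] (tvar 0, tzero).

(* In a chain the first premise says that [m x] is Boolean, i.e. [x = 0] or
   [m x >= 1], and the second one says [m x <= 1]. *)
Lemma psi_premises_LV (a m : nat) (w : nat -> LV a) : 0 < m ->
  (forall p, List.In p (premises (psi m)) -> eval w p.1 = eval w p.2) ->
  vl (w 0) = 0 \/ m * vl (w 0) = a.
Proof.
case: m => // m _ Hp.
have /(congr1 (@vl a)) := Hp _ (or_introl erefl).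
have /(congr1 (@vl a)) := Hp _ (or_intror (or_introl erefl)).
rewrite vl_todot vl_toplus !vl_tmul vl_tzero succnK mulSn.
have := vl_le (w 0); set z := vl (w 0); set mz := m * z.
lia.
Qed.

Lemma sat_psi_LV (a m : nat) : 0 < m -> ~~ (m %| a) -> sat (LV a) (psi m).
Proof.
move=> m0 ndvd w /(psi_premises_LV m0) [w0|ma].
  by apply: (@vl_inj a); rewrite /= w0.
by case/negP: ndvd; rewrite -ma dvdn_mulr.
Qed.

Lemma not_sat_psi_LVB (m : nat) : 0 < m -> ~ sat (LVB m) (psi m).
Proof.
move=> m0 Hsat.
have lt1m : 1 < m.+1 by rewrite ltnS.
pose x : LVB m := (Ordinal lt1m, ord0).
suff /(congr1 (fun y : LVB m => vl y.1)) : eval (fun=> x) (tvar 0) = eval (fun=> x) tzero.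
  by [].
apply: Hsat => p [<-|[<-|//]]; cbn [fst snd]; rewrite !eval_prodMV; congr (_, _);
  apply: vl_inj; rewrite ?vl_todot ?vl_toplus !vl_tmul /= ?muln1 ?muln0; lia.
Qed.

Lemma dvdn_of_not_sat_psi (m m' : nat) : 0 < m' -> ~ sat (LVB m) (psi m') -> m' %| m.
Proof.
move=> m'0 /not_sat_witness [v [Hp Hc]].
have Hp1 p (hp : List.In p (premises (psi m'))) :
    eval (fun i => (v i).1) p.1 = eval (fun i => (v i).1) p.2.
  by move: (Hp p hp); rewrite !eval_prodMV => -[].
have Hp2 p (hp : List.In p (premises (psi m'))) :
    eval (fun i => (v i).2) p.1 = eval (fun i => (v i).2) p.2.
  by move: (Hp p hp); rewrite !eval_prodMV => -[].
have [v1|<-] := psi_premises_LV m'0 Hp1; last exact: dvdn_mulr.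
have [v2|m'1] := psi_premises_LV m'0 Hp2.
  by case: Hc; rewrite /= [v 0]surjective_pairing; congr (_, _); apply: vl_inj.
by move/eqP: m'1; rewrite muln_eq1 => /andP[/eqP-> _]; exact: dvd1n.
Qed.

Lemma LV_scale_subproof (a b c : nat) (E : b = a * c) (x : LV a) : vl x * c < b.+1.
Proof. by rewrite ltnS E leq_mul2r vl_le orbT. Qed.

Definition LV_scale (a b c : nat) (E : b = a * c) (x : LV a) : LV b :=
  Ordinal (LV_scale_subproof E x).

Lemma vl_LV_scale (a b c : nat) (E : b = a * c) (x : LV a) : vl (LV_scale E x) = vl x * c.
Proof. by []. Qed.

Lemma LV_scale_hom (a b c : nat) (E : b = a * c) : hom (LV_scale E).
Proof.
split=> [|x|x y]; apply: vl_inj; rewrite ?vl_LV_scale //.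
- by rewrite !vl_mneg vl_LV_scale E mulnBl.
- by rewrite !vl_moplus !vl_LV_scale E -mulnDl minnMl.
Qed.

Lemma LV_scale_inj (a b c : nat) (E : b = a * c) : 0 < c -> injective (LV_scale E).
Proof.
move=> c0 x y /(congr1 (@vl b)); rewrite !vl_LV_scale => /eqP.
by rewrite eqn_pmul2r // => /eqP /vl_inj.
Qed.

Lemma LV_in_Qgen_LV (a c : nat) : 0 < c -> Qgen (single (LV (a * c))) (LV a).
Proof.
move=> c0; apply: Qgen_separating => x y xy.
exists (LV (a * c)), (LV_scale (erefl (a * c))); split=> //; first exact: LV_scale_hom.
by move=> /(LV_scale_inj c0).
Qed.

Lemma LVB_in_Qgen_LV (m N : nat) : 0 < N -> m %| N -> Qgen (single (LV N)) (LVB m).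
Proof.
move=> N0 mN.
have EN : N = m * (N %/ m) by rewrite mulnC divnK.
have E1 : N = 1 * N by rewrite mul1n.
have : 0 < m * (N %/ m) by rewrite -EN.
rewrite muln_gt0 => /andP[_ c0].
apply: Qgen_separating => -[x1 x2] [y1 y2] xy.
have [e1|n1] := eqVneq x1 y1.
- exists (LV N), (fun z : LVB m => LV_scale E1 z.2); split=> //.
  + exact: hom_comp (hom_snd _ _) (LV_scale_hom E1).
  + by move=> /(LV_scale_inj N0) /= e2; apply: xy; rewrite e1 e2.
- exists (LV N), (fun z : LVB m => LV_scale EN z.1); split=> //.
  + exact: hom_comp (hom_fst _ _) (LV_scale_hom EN).
  + by move=> /(LV_scale_inj c0) /= e1; rewrite e1 eqxx in n1.
Qed.

Lemma Qgen_pair_LVB_sub (n c m : nat) : 0 < n -> 0 < c -> m %| n * c ->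
  subclass (Qgen (pair (LV n) (LVB m))) (Qgen (single (LV (n * c)))).
Proof.
move=> n0 c0 mnc; apply: Qgen_mono => B [->|->]; first exact: LV_in_Qgen_LV.
by apply: LVB_in_Qgen_LV; rewrite // muln_gt0 n0.
Qed.

Lemma Qgen_pair_LVB_strict (n m : nat) : 0 < m -> ~~ (m %| n) ->
  strict_subclass (Qgen (single (LV n))) (Qgen (pair (LV n) (LVB m))).
Proof.
move=> m0 mn; split.
- by apply: Qgen_mono => B ->; apply: sub_Qgen; left.
- move=> /(_ (LVB m) (sub_Qgen (or_intror erefl))) QB; apply: (not_sat_psi_LVB m0).
  by apply: QB => B ->; exact: sat_psi_LV.
Qed.

Section Attained.
Variables (N V : nat) (w : nat -> LV N).

Definition attained (y : nat) : Prop := exists t, vars_lt V t /\ vl (eval w t) = y.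

Lemma attained_top : attained N.
Proof. by exists (tneg tzero); rewrite vl_tneg subn0. Qed.

Lemma attained_sub (a b : nat) : attained a -> attained b -> attained (a - b).
Proof.
move=> [ta [taV <-]] [tb [tbV <-]].
by exists (tsub ta tb); rewrite vl_tsub /= taV tbV.
Qed.

Lemma attained_tmul (a j : nat) : attained a -> attained (minn N (j * a)).
Proof. by move=> [ta [taV <-]]; exists (tmul j ta); rewrite vars_lt_tmul // vl_tmul. Qed.

Lemma attained_gcd (a b : nat) : attained a -> attained b -> attained (gcdn a b).
Proof.
elim: {a b}(a + b) {-2}a {-2}b (leqnn (a + b)) => [|s IH] a b.
  by rewrite leqn0 addn_eq0 => /andP[/eqP-> /eqP->].
move=> abs aa ab; case: (posnP a) => [->|a0]; first by rewrite gcd0n.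
case: (posnP b) => [->|b0]; first by rewrite gcdn0.
case: (leqP a b) => [ab'|/ltnW ba].
- rewrite -(subnKC ab') gcdnDl; apply: IH => //; [lia | exact: attained_sub].
- rewrite -(subnKC ba) gcdnC gcdnDl gcdnC; apply: IH => //; [lia | exact: attained_sub].
Qed.

End Attained.

Definition tis1 (N : nat) (u : term) : term := tneg (tmul N (tneg u)).
Definition tis0 (N : nat) (u : term) : term := tneg (tmul N u).

Section BooleanTests.
Variables (N : nat) (w : nat -> LV N).

Lemma vl_tis1 (u : term) : vl (eval w (tis1 N u)) = if vl (eval w u) == N then N else 0.
Proof.
rewrite vl_tneg vl_tmul vl_tneg; have := vl_le (eval w u); set y := vl _ => yN.
case: eqP => [->|/eqP ny]; first by rewrite subnn muln0 minn0 subn0.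
have : N <= N * (N - y) by rewrite leq_pmulr // subn_gt0 ltn_neqAle ny yN.
lia.
Qed.

Lemma vl_tis0 (u : term) : vl (eval w (tis0 N u)) = if vl (eval w u) == 0 then N else 0.
Proof.
rewrite vl_tneg vl_tmul; set y := vl _.
case: eqP => [->|/eqP ny]; first by rewrite muln0 minn0 subn0.
have : N <= N * y by rewrite leq_pmulr // lt0n.
lia.
Qed.

End BooleanTests.

(* In [LV N] with [N = m * M], [tatom m N s] is [1] iff [s = M/N]: its factors
   test [m s = 1] and [s (.) (m - 1) s = 0], i.e. [m s >= 1] and [m s <= 1]. *)
Definition tatom (m N : nat) (s : term) : term :=
  todot (tis1 N (tmul m s)) (tis0 N (todot s (tmul m.-1 s))).

Definition tpick (m N : nat) (s : term) : term := todot s (tatom m N s).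

Lemma vars_lt_tpick (V m N : nat) (s : term) : vars_lt V s -> vars_lt V (tpick m N s).
Proof. by move=> sV; rewrite /= !vars_lt_tmul //= ?sV ?vars_lt_tmul. Qed.

Lemma vl_tpick (m N M : nat) (w : nat -> LV N) (s : term) : N = m * M -> 0 < m ->
  vl (eval w (tpick m N s)) = if vl (eval w s) == M then M else 0.
Proof.
move=> NM m0; rewrite vl_todot vl_todot vl_tis1 vl_tis0 vl_todot !vl_tmul.
have := vl_le (eval w s); set x := vl (eval w s) => xN.
have mx : m * x = m.-1 * x + x by rewrite -{1}(prednK m0) mulSn addnC.
have /eqP ge_xM : (M <= x) == (N <= m * x) by rewrite NM leq_pmul2l.
have /eqP le_xM : (x <= M) == (m * x <= N) by rewrite NM leq_pmul2l.
set P := m * x in mx ge_xM le_xM *; set Q := m.-1 * x in mx *.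
by do 3 case: eqP; lia.
Qed.

Definition two_valued (N M : nat) (t : term) : Prop :=
  forall w : nat -> LV N, vl (eval w t) = 0 \/ vl (eval w t) = M.

Section LVBImage.
Variables (N m M : nat) (NM : N = m * M) (M0 : 0 < M).
Variables (B : MVsig) (QB : Qgen (single (LV N)) B).
Variables (t : term) (tv : two_valued N M t) (v : nat -> B).

(* Where [t] is [M/N = 1/m] the term [timg i j] takes the value [i/m], and
   where [t] is [0] it takes the Boolean value [j]. *)
Definition timg (i j : nat) : term := toplus (tmul i t) (tmul j (tneg (tmul m t))).

Lemma vl_timg (w : nat -> LV N) (i j : nat) : i <= m ->
  vl (eval w (timg i j)) = if vl (eval w t) == 0 then minn N (j * N) else i * M.
Proof.
move=> im; rewrite vl_toplus !vl_tmul vl_tneg vl_tmul.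
have iMN : i * M <= N by rewrite NM leq_mul2r im orbT.
case: (tv w) => ->; first by rewrite eqxx !muln0; lia.
by rewrite -NM (negPf (lt0n_neq0 M0)); lia.
Qed.

Lemma eval_eq_of_vl (t1 t2 : term) :
  (forall w : nat -> LV N, vl (eval w t1) = vl (eval w t2)) -> eval v t1 = eval v t2.
Proof. by move=> Ht; apply: (Qgen_eval_eq QB) => _ -> w; apply: vl_inj. Qed.

Definition LVB_image (x : LVB m) : B := eval v (timg (vl x.1) (vl x.2)).

Lemma LVB_image_hom : hom LVB_image.
Proof.
split=> [|[x1 x2]|[x1 x2] [y1 y2]]; rewrite /LVB_image.
- by apply: (@eval_eq_of_vl (timg 0 0) tzero) => w; rewrite vl_timg //; case: ifP.
- have -> : vl (@mneg (LVB m) (x1, x2)).1 = m - vl x1 by [].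
  have -> : vl (@mneg (LVB m) (x1, x2)).2 = 1 - vl x2 by [].
  apply: (@eval_eq_of_vl _ (tneg (timg (vl x1) (vl x2)))) => w.
  rewrite vl_tneg !vl_timg ?leq_subr ?vl_le //; case: ifP => _; last by rewrite NM mulnBl.
  by have := vl_le x2; case: (vl x2) => [|[|]] //; rewrite ?mul0n ?mul1n ?subn0; lia.
- have -> : vl (@moplus (LVB m) (x1, x2) (y1, y2)).1 = minn m (vl x1 + vl y1) by [].
  have -> : vl (@moplus (LVB m) (x1, x2) (y1, y2)).2 = minn 1 (vl x2 + vl y2) by [].
  apply: (@eval_eq_of_vl _ (toplus (timg (vl x1) (vl x2)) (timg (vl y1) (vl y2)))) => w.
  rewrite vl_toplus !vl_timg ?geq_minl ?vl_le //; case: ifP => _; last first.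
    by rewrite NM -mulnDl minnMl.
  have := vl_le x2; have := vl_le y2.
  by case: (vl x2) => [|[|]] //; case: (vl y2) => [|[|]] //; rewrite ?mul0n ?mul1n; lia.
Qed.

(* In [LV N], equal images of [(i, j)] and [(i', j)] with [i != i'] force
   [t = 0]. *)
Lemma LVB_image_inj (x y : LVB m) :
  eval v t <> mzero B -> x.2 = y.2 -> LVB_image x = LVB_image y -> x = y.
Proof.
case: x y => [x1 x2] [y1 y2] /= t0 <-; rewrite /LVB_image /=.
have [/vl_inj -> //|ne] := eqVneq (vl x1) (vl y1).
move=> eq_img; case: t0.
pose e := MkQeq [:: (timg (vl x1) (vl x2), timg (vl y1) (vl x2))] (t, tzero).
apply: (Qgen_sat (e := e) QB); last by move=> p [<-|].
move=> _ -> w /(_ _ (or_introl erefl)) /= /(congr1 (@vl N)).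
rewrite !vl_timg ?vl_le //; case: ifP => [/eqP t0 _|_ /eqP]; first exact: vl_inj.
by rewrite eqn_mul2r (negPf (lt0n_neq0 M0)) (negPf ne).
Qed.

End LVBImage.

Lemma LVB_in_Qgen_pair (N m M n : nat) (B : MVsig) (t : term) (v : nat -> B) :
  N = m * M -> 0 < M -> 0 < n -> Qgen (single (LV N)) B -> two_valued N M t ->
  eval v t <> mzero B -> Qgen (pair B (LV n)) (LVB m).
Proof.
move=> NM M0 n0 QB tv t0; apply: Qgen_separating => x y xy.
have [e2|n2] := eqVneq x.2 y.2.
- exists B, (@LVB_image m B t v); split; first by left.
  + exact: (LVB_image_hom NM M0 QB tv v).
  + by move=> /(LVB_image_inj NM M0 QB tv t0 e2).
- have E1 : n = 1 * n by rewrite mul1n.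
  exists (LV n), (fun z : LVB m => LV_scale E1 z.2); split; first by right.
  + exact: hom_comp (hom_snd _ _) (LV_scale_hom E1).
  + by move=> /(LV_scale_inj n0) e2; rewrite e2 eqxx in n2.
Qed.

Section ScaleDown.
Variables (n k V : nat) (k0 : 0 < k) (w : nat -> LV (n * k)).
Hypothesis dvd_w : forall i, i < V -> k %| vl (w i).

Lemma LV_unscale_subproof (i : nat) : vl (w i) %/ k < n.+1.
Proof. by rewrite ltnS -[leqRHS](mulnK n k0) leq_div2r // vl_le. Qed.

Definition LV_unscale (i : nat) : LV n := Ordinal (LV_unscale_subproof i).

Lemma vl_eval_unscale (t : term) : vars_lt V t -> vl (eval LV_unscale t) * k = vl (eval w t).
Proof.
elim: t => [i /dvd_w /divnK //||s IH /IH|s IHs u IHu /andP[/IHs + /IHu]] //.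
- by rewrite !vl_tneg mulnBl => ->.
- by rewrite !vl_toplus minnMl mulnDl => -> ->.
Qed.

End ScaleDown.

(* A valuation in [LV (n * k)] taking only values divisible by [k] lives in a
   copy of [LV n]; so a refutation of a quasi-equation valid in [LV n] must
   use a value not divisible by [k]. *)
Lemma refutation_not_dvdn (n k V : nat) (e : qeq) (w : nat -> LV (n * k)) :
  0 < k -> sat (LV n) e ->
  (forall p, List.In p (concl e :: premises e) -> vars_lt V p.1 && vars_lt V p.2) ->
  (forall p, List.In p (premises e) -> eval w p.1 = eval w p.2) ->
  eval w (concl e).1 <> eval w (concl e).2 ->
  exists2 i, i < V & ~~ (k %| vl (w i)).
Proof.
move=> k0 He eV Hp Hc; apply: NNPP => nex; apply: Hc.
have dvd_w i : i < V -> k %| vl (w i).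
  by move=> iV; apply: NNPP => /negP nd; apply: nex; exists i.
have unscale t := vl_eval_unscale k0 dvd_w (t := t).
have /andP[c1 c2] := eV _ (or_introl erefl).
apply: vl_inj; rewrite -(unscale _ c1) -(unscale _ c2); congr (vl _ * _).
apply: He => p hp; have /andP[p1 p2] := eV _ (or_intror hp).
by apply/vl_inj/eqP; rewrite -(eqn_pmul2r k0) unscale // unscale // Hp.
Qed.

Lemma logn_lt_of_not_dvdn (d n : nat) : 0 < d -> ~~ (d %| n) ->
  exists2 p, prime p & logn p n < logn p d.
Proof.
move=> d0 dn; have n0 : 0 < n by move: dn; case: n => //; rewrite dvdn0.
have [p] : exists p, ~ (p \in \pi(d) -> d`_p %| n).
  by apply: not_all_ex_not => /(dvdn_partP n d0); apply/negP.
move=> npd; have [pd ndvd] := imply_to_and _ _ npd.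
have pp : prime p by move: pd; rewrite mem_primes => /andP[].
by move/negP: ndvd; rewrite p_part pfactor_dvdn // -ltnNge; exists p.
Qed.

(* If [d = n k / gcd(x, n k)] divided [n], then [k] would divide
   [gcd(x, n k)], hence [x]. *)
Lemma prime_pow_dvdn_div_gcdn (n k x : nat) : 0 < n -> 0 < k -> ~~ (k %| x) ->
  exists q, [/\ prime q, q %| k & q ^ (logn q n).+1 %| n * k %/ gcdn x (n * k)].
Proof.
move=> n0 k0 kx.
have N0 : 0 < n * k by rewrite muln_gt0 n0.
set N := n * k in N0 *; set g := gcdn x N; set d := N %/ g.
have g0 : 0 < g by rewrite gcdn_gt0 N0 orbT.
have Ndg : N = d * g by rewrite divnK // dvdn_gcdr.
have d0 : 0 < d by move: N0; rewrite Ndg muln_gt0 => /andP[].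
have /(logn_lt_of_not_dvdn d0) [q pq lt_nd] : ~~ (d %| n).
  apply: contra kx => /dvdnP [c nc].
  suff kg : k %| g by exact: dvdn_trans kg (dvdn_gcdl x N).
  by apply/dvdnP; exists c; apply/eqP; rewrite -(eqn_pmul2l d0) -Ndg /N nc -mulnA mulnCA.
exists q; split=> //; last by rewrite pfactor_dvdn.
have le_d : logn q d <= logn q n + logn q k.
  by rewrite -lognM // -/N dvdn_leq_log // Ndg dvdn_mulr.
have : 0 < logn q k by lia.
by rewrite logn_gt0 mem_primes => /and3P[].
Qed.

Definition separating_term (n k q : nat) (t : term) : Prop :=
  exists M, n * k = q ^ (logn q n).+1 * M /\ two_valued (n * k) M t.

(* Starting from a value [x] not divisible by [k], terms attain every multiple
   of [g = gcd(x, n k)], in particular [M = n k / q ^ (logn q n).+1], and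
   [tpick] turns a term attaining [M] into a two-valued one. *)
Lemma refutation_separating_term (n k V : nat) (e : qeq) (w : nat -> LV (n * k)) :
  0 < n -> 0 < k -> sat (LV n) e ->
  (forall p, List.In p (concl e :: premises e) -> vars_lt V p.1 && vars_lt V p.2) ->
  (forall p, List.In p (premises e) -> eval w p.1 = eval w p.2) ->
  eval w (concl e).1 <> eval w (concl e).2 ->
  exists q t, [/\ prime q, q %| k, separating_term n k q t, vars_lt V t &
                  vl (eval w t) <> 0].
Proof.
move=> n0 k0 He eV Hp Hc.
have [i iV kx] := refutation_not_dvdn k0 He eV Hp Hc.
have [q [pq qk]] := prime_pow_dvdn_div_gcdn n0 k0 kx.
have N0 : 0 < n * k by rewrite muln_gt0 n0.
set N := n * k in w Hp Hc kx N0 *; set g := gcdn _ N; set m := q ^ _ => md.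
have m0 : 0 < m by rewrite expn_gt0 prime_gt0.
have g0 : 0 < g by rewrite gcdn_gt0 N0 orbT.
set M := N %/ g %/ m * g.
have NM : N = m * M by rewrite /M mulnA [m * _]mulnC divnK // divnK // dvdn_gcdr.
have M0 : 0 < M by move: N0; rewrite NM muln_gt0 => /andP[].
have [s [sV vs]] : attained V w M.
  have xg : attained V w g by apply: attained_gcd (attained_top V w); exists (tvar i).
  have MN : M <= N by rewrite [leqRHS]NM leq_pmull.
  by have := attained_tmul (N %/ g %/ m) xg; rewrite (minn_idPr MN).
exists q, (tpick m N s); split=> //.
- exists M; split=> // w'.
  by rewrite (vl_tpick _ _ NM m0); case: eqP; [right | left].
- exact: vars_lt_tpick.
- by rewrite (vl_tpick _ _ NM m0) vs eqxx; apply/eqP; rewrite -lt0n.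
Qed.

Lemma fin_choice_list (T : finType) (X : Type) (R : T -> X -> Prop) :
  (forall x, exists y, R x y) ->
  exists ys : list X,
    (forall y, List.In y ys -> exists x, R x y) /\ forall x, exists2 y, List.In y ys & R x y.
Proof.
move=> HR.
suff [ys [Rys Hys]] : exists ys : list X, (forall y, List.In y ys -> exists x, R x y) /\
    forall x, x \in enum T -> exists2 y, List.In y ys & R x y.
  by exists ys; split=> // x; apply: Hys; rewrite mem_enum.
elim: (enum T) => [|x s [ys [Rys Hys]]]; first by exists nil.
have [y Rxy] := HR x.
exists (y :: ys); split=> [y' [<-|/Rys] //|x']; first by exists x.
rewrite in_cons => /orP[/eqP -> | /Hys [y' y'ys Ry']].
- by exists y => //; left.
- by exists y' => //; right.
Qed.

Definition ffun_valuation (N V : nat) (f : {ffun 'I_V -> 'I_N.+1}) : nat -> LV N :=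
  fun i => if insub i is Some j then f j else ord0.

Definition add_zero_premises (e : qeq) (ts : list term) : qeq :=
  MkQeq (premises e ++ List.map (fun t => (t, tzero)) ts) (concl e).

(* Up to the variables of [e], there are finitely many refutations of [e] in
   [LV (n * k)]; one separating term for each of them excludes them all. *)
Lemma refutations_excluded (n k V : nat) (e : qeq) : 0 < n -> 0 < k -> sat (LV n) e ->
  (forall p, List.In p (concl e :: premises e) -> vars_lt V p.1 && vars_lt V p.2) ->
  exists ts : list term,
    (forall t, List.In t ts ->
       t = tzero \/ exists2 q, prime q /\ q %| k & separating_term n k q t) /\
    sat (LV (n * k)) (add_zero_premises e ts).
Proof.
move=> n0 k0 He eV.
pose refutes (w : nat -> LV (n * k)) :=
  (forall p, List.In p (premises e) -> eval w p.1 = eval w p.2) /\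
  eval w (concl e).1 <> eval w (concl e).2.
pose R (f : {ffun 'I_V -> 'I_(n * k).+1}) t := [/\ vars_lt V t,
  t = tzero \/ exists2 q, prime q /\ q %| k & separating_term n k q t &
  refutes (ffun_valuation f) -> vl (eval (ffun_valuation f) t) <> 0].
have [ts [Rts Hts]] : exists ts : list term, (forall t, List.In t ts -> exists f, R f t) /\
    forall f : {ffun 'I_V -> 'I_(n * k).+1}, exists2 t, List.In t ts & R f t.
  apply: fin_choice_list => f.
  have [[Hp Hc]|nref] := classic (refutes (ffun_valuation f)); last first.
    by exists tzero; split=> //; left.
  have [q [t [pq qk sep tV t0]]] := refutation_separating_term n0 k0 He eV Hp Hc.
  by exists t; split=> //; right; exists q.
exists ts; split=> [t /Rts [f [_ Ht _]] // | w Hw]; apply: NNPP => Hc.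
pose f := [ffun j : 'I_V => w (val j)].
have agree u : vars_lt V u -> eval (ffun_valuation f) u = eval w u.
  by move=> uV; apply: (eq_eval uV) => i iV; rewrite /ffun_valuation insubT ffunE.
have [t tts [tV _]] := Hts f; apply.
- split.
  + move=> p hp; have /andP[p1 p2] := eV _ (or_intror hp).
    by rewrite !agree //; apply: Hw; apply/List.in_app_iff; left.
  + by have /andP[c1 c2] := eV _ (or_introl erefl); rewrite !agree.
- rewrite agree // (Hw (t, tzero)) //; apply/List.in_app_iff; right.
  by apply/List.in_map_iff; exists t.
Qed.

Lemma LVB_in_cover (n k : nat) (D : MVclass) : 0 < n -> 0 < k ->
  is_quasivariety D -> subclass D (Qgen (single (LV (n * k)))) ->
  strict_subclass (Qgen (single (LV n))) D ->
  exists q, [/\ prime q, q %| k & D (LVB (q ^ (logn q n).+1))].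
Proof.
move=> n0 k0 qvD Dsub [LVnD notDsub].
have [B [DB nQB]] : exists B, D B /\ ~ Qgen (single (LV n)) B.
  by apply: NNPP => nex; apply: notDsub => B DB; apply: NNPP => nQB; apply: nex; exists B.
have [e [He /not_sat_witness [v [Hp Hc]]]] := not_Qgen_witness nQB.
have [V eV] := vars_lt_exists (concl e :: premises e).
have [ts [Hts sat_ts]] := refutations_excluded n0 k0 (He _ erefl) eV.
have [t [tts t0]] : exists t, List.In t ts /\ eval v t <> mzero B.
  apply: NNPP => nex; apply: Hc.
  apply: (Qgen_sat (e := add_zero_premises e ts) (Dsub B DB)) => [_ -> //|p].
  case/List.in_app_iff => [/Hp //|/List.in_map_iff [t [<- tts]]].
  by apply: NNPP => t0; apply: nex; exists t.
have [t_0|[q [pq qk] [M [NM tv]]]] := Hts t tts; first by rewrite t_0 in t0.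
exists q; split=> //.
apply: (Qgen_min (K := pair B (LV n)) qvD).
  by move=> _ [->|->] //; apply: LVnD; exact: sub_Qgen.
have : 0 < n * k by rewrite muln_gt0 n0.
rewrite NM muln_gt0 => /andP[_ M0].
exact: (LVB_in_Qgen_pair (v := v) NM M0 n0 (Dsub B DB) tv t0).
Qed.

Definition cover_at (n q : nat) : MVclass := Qgen (pair (LV n) (LVB (q ^ (logn q n).+1))).

Section Covers.
Variables (n : nat) (n0 : 0 < n).

Lemma not_dvdn_pow_logn_succ (q : nat) : prime q -> ~~ (q ^ (logn q n).+1 %| n).
Proof. by move=> pq; rewrite pfactor_dvdn // ltnn. Qed.

Lemma cover_at_sub (k q : nat) : 0 < k -> prime q -> q %| k ->
  subclass (cover_at n q) (Qgen (single (LV (n * k)))).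
Proof.
move=> k0 pq qk; apply: Qgen_pair_LVB_sub => //.
by rewrite expnSr dvdn_mul // pfactor_dvdnn.
Qed.

Lemma cover_at_strict (q : nat) : prime q ->
  strict_subclass (Qgen (single (LV n))) (cover_at n q).
Proof.
move=> pq; apply: Qgen_pair_LVB_strict (not_dvdn_pow_logn_succ pq).
by rewrite expn_gt0 prime_gt0.
Qed.

Lemma cover_at_inj (q q' : nat) : prime q -> prime q' ->
  cover_at n q (LVB (q' ^ (logn q' n).+1)) -> q' = q.
Proof.
move=> pq pq' Cq'; have m'0 : 0 < q' ^ (logn q' n).+1 by rewrite expn_gt0 prime_gt0.
suff /dvdn_of_not_sat_psi : ~ sat (LVB (q ^ (logn q n).+1)) (psi (q' ^ (logn q' n).+1)).
  move=> /(_ m'0) m'q; have : q' %| q ^ (logn q n).+1.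
    by apply: dvdn_trans m'q; apply: dvdn_exp.
  by rewrite Euclid_dvdX // andbT dvdn_prime2 // => /eqP.
move=> sat_q; apply: (not_sat_psi_LVB m'0); apply: Cq' => _ [->|->] //.
exact: sat_psi_LV m'0 (not_dvdn_pow_logn_succ pq').
Qed.

End Covers.

Lemma minimal_cover_iff (n k : nat) (C : MVclass) : 0 < n -> 0 < k ->
  minimal_cover (single (LV n)) (single (LV (n * k))) C <->
  exists q, [/\ prime q, q %| k & eqclass C (cover_at n q)].
Proof.
move=> n0 k0; split.
- case=> qvC Csub strictC minC.
  have [q [pq qk Cq]] := LVB_in_cover n0 k0 qvC Csub strictC.
  have CqC : subclass (cover_at n q) C.
    by apply: Qgen_min => // _ [->|->] //; apply: strictC.1; exact: sub_Qgen.
  have CCq := minC _ (Qgen_quasivariety _) (cover_at_sub n0 k0 pq qk)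
    (cover_at_strict n0 pq) CqC.
  by exists q; split=> // A; split; [apply: CCq | apply: CqC].
- case=> q [pq qk eC].
  have [S HS] := Qgen_quasivariety (pair (LV n) (LVB (q ^ (logn q n).+1))).
  have [sub_bot nsub_bot] := cover_at_strict n0 pq.
  split.
  + by exists S => A; apply: iff_trans (eC A) (HS A).
  + by move=> A /eC; apply: cover_at_sub.
  + by split=> [A /sub_bot /eC // | sub]; apply: nsub_bot => A /eC /sub.
  + move=> D qvD Dsub strictD DC.
    have [q' [pq' qk' Dq']] := LVB_in_cover n0 k0 qvD Dsub strictD.
    have eq_q : q' = q by apply: (cover_at_inj n0 pq pq'); apply/eC/DC.
    move=> A /eC; apply: Qgen_min => // _ [->|->]; last by rewrite -eq_q.
    by apply: strictD.1; exact: sub_Qgen.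
Qed.

Lemma logn_eq (q n r : nat) : prime q -> 0 < n ->
  (logn q n == r) = (q ^ r %| n) && ~~ (q ^ r.+1 %| n).
Proof. by move=> pq n0; rewrite !pfactor_dvdn // -ltnNge ltnS eqn_leq andbC. Qed.

Theorem theorem5p9 (n k : nat) (hn : 0 < n) (hk : 1 < k) (C : MVclass) :
  minimal_cover (single (LV n)) (single (LV (n * k))) C <->
  ((exists q : nat,
       [/\ prime q, q %| k, ~~ (q %| n) &
           eqclass C (Qgen (pair (LV n) (prodMV (LV q) (LV 1))))]) \/
   (exists q r : nat,
       [/\ prime q, 1 <= r, q %| k, (q ^ r %| n) && ~~ (q ^ r.+1 %| n) &
           eqclass C (Qgen (pair (LV n) (prodMV (LV (q ^ r.+1)) (LV 1))))])).
Proof.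
rewrite minimal_cover_iff ?(ltn_trans _ hk) //; split.
- case=> q [pq qk eC]; have [r0|r_gt0] := posnP (logn q n).
  + left; exists q; rewrite /cover_at r0 expn1 in eC; split=> //.
    by move/eqP: r0; rewrite logn_eq // expn0 dvd1n expn1.
  + by right; exists q, (logn q n); split=> //; rewrite -logn_eq.
- case=> [[q [pq qk nqn eC]] | [q [r [pq _ qk qrn eC]]]]; exists q; split=> //.
  + suff r0 : logn q n = 0 by rewrite /cover_at r0 expn1.
    by apply/eqP; rewrite logn_eq // expn0 dvd1n expn1.
  + suff lr : logn q n = r by rewrite /cover_at lr.
    by apply/eqP; rewrite logn_eq.
Qed.
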